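(* Suppose $n$ is odd. Let $\ell$ be the smallest integer $\ge0$ such that $a_{\ell+1}\neq0$, and let $\lambda:=[\ell/2]$. Then the $(n+1)/2$ functions $J_1,\dots,J_\lambda,\ H,\ F_{\lambda+2},F_{\lambda+3},\dots,F_{(n-1)/2},\ C$ are pairwise in involution with respect to $\{\cdot,\cdot\}$ and functionally independent (their differentials are linearly independent on a dense open subset of $\mathbb R^n$). Hence they define a Liouville integrable system on $(\mathbb R^n,\{\cdot,\cdot\})$ (whose Poisson structure has rank $n-1$).
   Context: Let $n\ge1$, $(a_1,\dots,a_n)\in\mathbb R^n\setminus\{0\}$. On $\mathbb R^n$ with coordinates $x_1,\dots,x_n$ consider the Poisson bracket $\{x_i,x_j\}=x_ix_j$ for $1\le i<j\le n$ (extended by skew-symmetry and the Leibniz rule; rational functions are considered on the open dense set where their denominators do not vanish). Let $H=a_1x_1+\dots+a_nx_n$, $v_0:=0$ and $v_i:=a_1x_1+\dots+a_ix_i$ for $i=1,\dots,n$. For $k=1,\dots,[n/2]$ let $J_k:=\dfrac{x_1x_3\cdots x_{2k-1}}{x_2x_4\cdots x_{2k}}$. For $n$ odd and $k=1,\dots,(n+1)/2$ let $F_k:=v_{2k-1}\dfrac{x_{2k+1}x_{2k+3}\cdots x_n}{x_{2k}x_{2k+2}\cdots x_{n-1}}$ (empty product $=1$, so $F_{(n+1)/2}=H$), and let $C:=\dfrac{x_1x_3\cdots x_n}{x_2x_4\cdots x_{n-1}}$. *)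

From Stdlib Require Import Reals Lra Lia List.
Open Scope R_scope.

(* Points of R^n are x : nat -> R, with coordinates x 1, ..., x n
   (the values x 0, x (n+1), ... are irrelevant).  Likewise a : nat -> R
   encodes (a_1,...,a_n). *)

Fixpoint sumR (m : nat) (f : nat -> R) : R :=
  match m with
  | O => 0
  | S k => sumR k f + f (S k)
  end.

Fixpoint stepprod (x : nat -> R) (j k : nat) : R :=
  match k with
  | O => 1
  | S k' => x j * stepprod x (j + 2)%nat k'
  end.

Definition vfun (a : nat -> R) (i : nat) (x : nat -> R) : R :=
  sumR i (fun j => a j * x j).

Definition Hfun (n : nat) (a : nat -> R) : (nat -> R) -> R := vfun a n.

Definition Jfun (k : nat) (x : nat -> R) : R :=
  stepprod x 1 k / stepprod x 2 k.

(* F_k = v_{2k-1} * x_{2k+1} x_{2k+3} ... x_n / (x_{2k} x_{2k+2} ... x_{n-1})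
   (n odd; both products have (n-2k+1)/2 factors) *)
Definition Ffun (n : nat) (a : nat -> R) (k : nat) (x : nat -> R) : R :=
  vfun a (2 * k - 1) x *
  (stepprod x (2 * k + 1) ((n + 1 - 2 * k) / 2) /
   stepprod x (2 * k) ((n + 1 - 2 * k) / 2)).

Definition Cfun (n : nat) (x : nat -> R) : R :=
  stepprod x 1 ((n + 1) / 2) / stepprod x 2 ((n - 1) / 2).

Definition has_partial (f : (nat -> R) -> R) (x : nat -> R) (i : nat) (l : R) : Prop :=
  derivable_pt_lim (fun t => f (fun j => if Nat.eqb j i then t else x j)) (x i) l.

Definition grad_at (n : nat) (f : (nat -> R) -> R) (x : nat -> R) (g : nat -> R) : Prop :=
  forall i, (1 <= i <= n)%nat -> has_partial f x i (g i).

(* {f,g}(x) = sum_{1<=i<j<=n} x_i x_j (d_i f d_j g - d_j f d_i g),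
   i.e. the bracket determined by {x_i,x_j} = x_i x_j for i<j. *)
Definition poisson (n : nat) (x : nat -> R) (df dg : nat -> R) : R :=
  sumR n (fun j => sumR (j - 1) (fun i => x i * x j * (df i * dg j - df j * dg i))).

(* The open dense set where the denominators (even coordinates) do not vanish. *)
Definition domain (n : nat) (x : nat -> R) : Prop :=
  forall i, (1 <= i <= n)%nat -> Nat.even i = true -> x i <> 0.

Definition in_involution (n : nat) (f g : (nat -> R) -> R) : Prop :=
  forall x, domain n x ->
    exists df dg, grad_at n f x df /\ grad_at n g x dg /\ poisson n x df dg = 0.

Definition open_n (n : nat) (U : (nat -> R) -> Prop) : Prop :=
  forall x, U x -> exists eps, eps > 0 /\
    forall y, (forall i, (1 <= i <= n)%nat -> Rabs (y i - x i) < eps) -> U y.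

Definition dense_n (n : nat) (U : (nat -> R) -> Prop) : Prop :=
  forall x eps, eps > 0 ->
    exists y, U y /\ forall i, (1 <= i <= n)%nat -> Rabs (y i - x i) < eps.

Definition diffs_independent_at (n : nat) (fs : list ((nat -> R) -> R)) (x : nat -> R) : Prop :=
  exists grads : nat -> nat -> R,
    (forall m, (m < length fs)%nat -> grad_at n (nth m fs (fun _ => 0)) x (grads m)) /\
    forall c : nat -> R,
      (forall i, (1 <= i <= n)%nat ->
         fold_right Rplus 0 (map (fun m => c m * grads m i) (seq 0 (length fs))) = 0) ->
      forall m, (m < length fs)%nat -> c m = 0.

Definition functionally_independent (n : nat) (fs : list ((nat -> R) -> R)) : Prop :=
  exists U, open_n n U /\ dense_n n U /\ forall x, U x -> diffs_independent_at n fs x.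

Definition pfamily (n : nat) (a : nat -> R) (lam : nat) : list ((nat -> R) -> R) :=
  map Jfun (seq 1 lam) ++ (Hfun n a :: nil)
  ++ map (Ffun n a) (seq (lam + 2) ((n - 1) / 2 - (lam + 1)))
  ++ (Cfun n :: nil).

From Stdlib Require Import Reals Lra Lia List Bool FunctionalExtensionality ClassicalEpsilon.
Open Scope R_scope.

(* In the logarithmic coordinates [p_i = x_i * d_i f] the bracket becomes the constant form
   [omega p q = sum_(i<j) (p_i q_j - p_j q_i)].  The logarithmic gradients of [J_k], of [C] and
   of the monomial factor of [F_k] are alternating +-1 patterns on intervals, and that of [v_s]
   is [(a_1 x_1, ..., a_s x_s, 0, ...)]; every bracket in the family therefore reduces to
   telescoping partial sums of such patterns, and the brackets of [J_k] with [H] and [F_m]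
   vanish because [v_(2k) = 0] for [2k <= l].
   For independence (with [n = 2N+1]), a vanishing combination of the logarithmic gradients has
   vanishing partial sums; evaluating them at [s = 2N], [2m], [2N+1], [2m+1] kills in turn the
   coefficients of [H], of the [F_m] (downwards in [m]), of [C] and of the [J_m] (downwards), as
   long as all [x_i] and all [v_(2t)] with [t > lam] are nonzero.  That is the complement of
   finitely many hyperplanes, none of which contains the point [1 + K e_(l+1)] for large [K];
   hence it is open and dense. *)

Lemma sumR_ext m f g :
  (forall i, (1 <= i <= m)%nat -> f i = g i) -> sumR m f = sumR m g.
Proof.
  induction m as [|m IH]; intros H; simpl; auto.
  rewrite IH, (H (S m)) by lia + (intros; apply H; lia). reflexivity.
Qed.

Lemma sumR_lin m c1 c2 f g :
  sumR m (fun i => c1 * f i + c2 * g i) = c1 * sumR m f + c2 * sumR m g.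
Proof. induction m; simpl; [ring | rewrite IHm; ring]. Qed.

Lemma sumR_add m f g : sumR m (fun i => f i + g i) = sumR m f + sumR m g.
Proof. induction m; simpl; [ring | rewrite IHm; ring]. Qed.

Lemma sumR_scal m c f : sumR m (fun i => c * f i) = c * sumR m f.
Proof. induction m; simpl; [ring | rewrite IHm; ring]. Qed.

Lemma sumR_eq0 m f : (forall i, (1 <= i <= m)%nat -> f i = 0) -> sumR m f = 0.
Proof.
  intros H. rewrite (sumR_ext m f (fun i => 0 * f i)), sumR_scal; [ring |].
  intros i Hi; rewrite H; auto; ring.
Qed.

Lemma sumR_cut m s q : (s <= m)%nat ->
  sumR m (fun t => (if (t <=? s)%nat then 1 else 0) * q t) = sumR s q.
Proof.
  induction m as [|m IH]; intros Hs.
  - replace s with 0%nat by lia. reflexivity.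
  - destruct (Nat.eq_dec s (S m)) as [-> | Hne].
    + simpl. rewrite Nat.leb_refl, (sumR_ext m _ q); [ring |].
      intros i Hi. replace (i <=? S m)%nat with true by (symmetry; apply Nat.leb_le; lia). ring.
    + cbn [sumR]. rewrite IH by lia.
      replace (S m <=? s)%nat with false by (symmetry; apply Nat.leb_gt; lia). ring.
Qed.

Lemma sumR_abs_le m f g :
  (forall i, (1 <= i <= m)%nat -> Rabs (f i) <= g i) -> Rabs (sumR m f) <= sumR m g.
Proof.
  induction m as [|m IH]; intros H; simpl; [rewrite Rabs_R0; lra |].
  eapply Rle_trans; [apply Rabs_triang |].
  apply Rplus_le_compat; [apply IH; intros; apply H | apply H]; lia.
Qed.

Lemma sumR_nonneg m f : (forall i, (1 <= i <= m)%nat -> 0 <= f i) -> 0 <= sumR m f.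
Proof.
  induction m as [|m IH]; intros H; simpl; [lra |].
  assert (0 <= f (S m)) by (apply H; lia).
  assert (0 <= sumR m f) by (apply IH; intros; apply H; lia). lra.
Qed.

Lemma sumR_term_le m f i :
  (forall j, (1 <= j <= m)%nat -> 0 <= f j) -> (1 <= i <= m)%nat -> f i <= sumR m f.
Proof.
  induction m as [|m IH]; intros H Hi; [lia |]. simpl.
  assert (0 <= f (S m)) by (apply H; lia).
  destruct (Nat.eq_dec i (S m)) as [-> | Hne].
  - assert (0 <= sumR m f) by (apply sumR_nonneg; intros; apply H; lia). lra.
  - assert (f i <= sumR m f) by (apply IH; intros; try apply H; lia). lra.
Qed.

(** * The bracket in logarithmic coordinates *)

Definition omega (n : nat) (p q : nat -> R) : R :=
  sumR n (fun j => sumR (j - 1) (fun i => p i * q j - p j * q i)).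

Lemma poisson_omega n x df dg :
  poisson n x df dg = omega n (fun i => x i * df i) (fun i => x i * dg i).
Proof. apply sumR_ext; intros; apply sumR_ext; intros; ring. Qed.

Lemma omega_ext n p p' q q' :
  (forall i, (1 <= i <= n)%nat -> p i = p' i) ->
  (forall i, (1 <= i <= n)%nat -> q i = q' i) ->
  omega n p q = omega n p' q'.
Proof.
  intros Hp Hq. apply sumR_ext; intros j Hj. apply sumR_ext; intros i Hi.
  rewrite !Hp, !Hq by lia. reflexivity.
Qed.

Lemma omega_antisym n p q : omega n p q = - omega n q p.
Proof.
  enough (omega n p q + omega n q p = 0) by lra.
  unfold omega. rewrite <- sumR_add. apply sumR_eq0; intros.
  rewrite <- sumR_add. apply sumR_eq0; intros; ring.
Qed.

Lemma omega_diag n p : omega n p p = 0.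
Proof. pose proof (omega_antisym n p p). lra. Qed.

Lemma omega_lin_l n c1 c2 p1 p2 q :
  omega n (fun i => c1 * p1 i + c2 * p2 i) q = c1 * omega n p1 q + c2 * omega n p2 q.
Proof.
  unfold omega. rewrite <- sumR_lin. apply sumR_ext; intros.
  rewrite <- sumR_lin. apply sumR_ext; intros; ring.
Qed.

Lemma omega_lin_r n c1 c2 p q1 q2 :
  omega n p (fun i => c1 * q1 i + c2 * q2 i) = c1 * omega n p q1 + c2 * omega n p q2.
Proof.
  rewrite omega_antisym, omega_lin_l, (omega_antisym n p q1), (omega_antisym n p q2). ring.
Qed.

Lemma omega_scal_l n c p q : omega n (fun i => c * p i) q = c * omega n p q.
Proof.
  rewrite (omega_ext n _ (fun i => c * p i + 0 * p i) q q); [| intros; ring | reflexivity].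
  rewrite omega_lin_l. ring.
Qed.

Lemma omega_scal_r n c p q : omega n p (fun i => c * q i) = c * omega n p q.
Proof. rewrite omega_antisym, omega_scal_l, (omega_antisym n p q). ring. Qed.

(* The coefficient of [q t] in [omega n p q] is [sum_(i<t) p i - sum_(i>t) p i]. *)
Lemma omega_partial_sums n p q :
  omega n p q = sumR n (fun t => (sumR (t - 1) p + sumR t p - sumR n p) * q t).
Proof.
  induction n as [|n IH]; [reflexivity |].
  unfold omega in *. cbn [sumR]. rewrite IH. replace (S n - 1)%nat with n by lia.
  transitivity
    (sumR n (fun t => 1 * ((sumR (t - 1) p + sumR t p - sumR n p) * q t) + (- p (S n)) * q t)
     + (sumR n p + (sumR n p + p (S n)) - (sumR n p + p (S n))) * q (S n)).
  - rewrite sumR_lin.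
    assert (E : sumR n (fun i => p i * q (S n) - p (S n) * q i)
                = q (S n) * sumR n p + (- p (S n)) * sumR n q).
    { rewrite <- sumR_lin. apply sumR_ext; intros; ring. }
    rewrite E. ring.
  - f_equal. apply sumR_ext; intros. cbn [sumR]. ring.
Qed.

(** * Alternating sign patterns *)

Fixpoint oddR (s : nat) : R := match s with O => 0 | S s' => 1 - oddR s' end.

Definition sg (i : nat) : R := 2 * oddR i - 1.

Definition alt (p q i : nat) : R := if ((p <=? i) && (i <=? q))%nat then sg i else 0.

Lemma oddR_even k : oddR (2 * k) = 0.
Proof.
  induction k as [|k IH]; [reflexivity |].
  replace (2 * S k)%nat with (S (S (2 * k))) by lia.
  change (1 - (1 - oddR (2 * k)) = 0). rewrite IH. ring.
Qed.

Lemma oddR_odd k : oddR (2 * k + 1) = 1.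
Proof. rewrite Nat.add_1_r. change (1 - oddR (2 * k) = 1). rewrite oddR_even. ring. Qed.

Lemma oddR_pred_odd k : (1 <= k)%nat -> oddR (2 * k - 1) = 1.
Proof. intros. replace (2 * k - 1)%nat with (2 * (k - 1) + 1)%nat by lia. apply oddR_odd. Qed.

Lemma oddR_01 s : oddR s = 0 \/ oddR s = 1.
Proof. induction s; simpl; lra. Qed.

Lemma sg1 : sg 1 = 1.
Proof. unfold sg. simpl. ring. Qed.

Lemma sg_even c : sg (2 * c) = -1.
Proof. unfold sg. rewrite oddR_even. ring. Qed.

Lemma sg_S p : sg (S p) = - sg p.
Proof. unfold sg. simpl oddR. ring. Qed.

Lemma sg_SS p : sg (S (S p)) = sg p.
Proof. rewrite !sg_S. ring. Qed.

Lemma sg_sq p : sg p * sg p = 1.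
Proof. unfold sg. destruct (oddR_01 p) as [-> | ->]; ring. Qed.

Lemma sumR_alt p q s : (1 <= p)%nat -> (p <= q + 1)%nat ->
  sumR s (alt p q) = oddR (Nat.min s q) - oddR (Nat.min s (p - 1)).
Proof.
  intros H1 H2. induction s as [|s IH]; [simpl; ring |].
  cbn [sumR]. rewrite IH. unfold alt, sg.
  destruct (Nat.leb_spec (S s) q); destruct (Nat.leb_spec (S s) (p - 1)); try lia.
  - rewrite !Nat.min_l by lia.
    replace (p <=? S s)%nat with false by (symmetry; apply Nat.leb_gt; lia). simpl. ring.
  - rewrite (Nat.min_l (S s) q), (Nat.min_l s q), (Nat.min_r (S s) (p - 1)),
      (Nat.min_r s (p - 1)) by lia.
    replace (p <=? S s)%nat with true by (symmetry; apply Nat.leb_le; lia). simpl. ring.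
  - rewrite !(Nat.min_r _ q), !(Nat.min_r _ (p - 1)) by lia. rewrite andb_false_r. ring.
Qed.

Lemma alt_coef n p q t : (1 <= p)%nat -> (p <= q + 1)%nat -> (q <= n)%nat -> (1 <= t)%nat ->
  sumR (t - 1) (alt p q) + sumR t (alt p q) - sumR n (alt p q) =
  (if (t <=? q)%nat then 1 else 2 * oddR q)
  - (if (t <=? p - 1)%nat then 1 else 2 * oddR (p - 1)) - oddR q + oddR (p - 1).
Proof.
  intros Hp Hpq Hq Ht.
  assert (Pair : forall r, oddR (Nat.min (t - 1) r) + oddR (Nat.min t r)
                           = if (t <=? r)%nat then 1 else 2 * oddR r).
  { intros r. destruct (Nat.leb_spec t r).
    - rewrite !Nat.min_l by lia. destruct t; [lia |].
      replace (S t - 1)%nat with t by lia. simpl oddR. ring.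
    - rewrite !Nat.min_r by lia. ring. }
  rewrite !sumR_alt, <- !Pair, (Nat.min_r n q), (Nat.min_r n (p - 1)) by lia. ring.
Qed.

Lemma omega_alt_even_prefix n k r : (1 <= k)%nat -> (2 * k <= n)%nat ->
  omega n (alt 1 (2 * k)) r = sumR (2 * k) r.
Proof.
  intros. rewrite omega_partial_sums, <- (sumR_cut n (2 * k) r) by lia.
  apply sumR_ext; intros t Ht. rewrite alt_coef by lia.
  replace (t <=? 1 - 1)%nat with false by (symmetry; apply Nat.leb_gt; lia).
  rewrite oddR_even. simpl oddR. destruct (t <=? 2 * k)%nat; ring.
Qed.

Lemma omega_alt_odd_full N r : omega (2 * N + 1) (alt 1 (2 * N + 1)) r = 0.
Proof.
  rewrite omega_partial_sums. apply sumR_eq0; intros t Ht. rewrite alt_coef by lia.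
  replace (t <=? 1 - 1)%nat with false by (symmetry; apply Nat.leb_gt; lia).
  replace (t <=? 2 * N + 1)%nat with true by (symmetry; apply Nat.leb_le; lia).
  rewrite oddR_odd. simpl oddR. ring.
Qed.

Lemma omega_alt_even_tail N m r : (1 <= m)%nat -> (2 * m <= 2 * N + 1)%nat ->
  omega (2 * N + 1) (alt (2 * m) (2 * N + 1)) r
  = - (sumR (2 * N + 1) r - sumR (2 * m - 1) r).
Proof.
  intros. rewrite omega_partial_sums.
  transitivity (sumR (2 * N + 1)
    (fun t => (-1) * r t + 1 * ((if (t <=? 2 * m - 1)%nat then 1 else 0) * r t))).
  2: { rewrite sumR_lin, sumR_cut by lia. ring. }
  apply sumR_ext; intros t Ht. rewrite alt_coef by lia.
  replace (t <=? 2 * N + 1)%nat with true by (symmetry; apply Nat.leb_le; lia).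
  rewrite oddR_odd, oddR_pred_odd by lia. destruct (t <=? 2 * m - 1)%nat; ring.
Qed.

Definition trunc (a x : nat -> R) (p i : nat) : R := if (i <=? p)%nat then a i * x i else 0.

Lemma sumR_trunc a x p s : sumR s (trunc a x p) = vfun a (Nat.min s p) x.
Proof.
  induction s as [|s IH]; [reflexivity |].
  cbn [sumR]. rewrite IH. unfold trunc. destruct (Nat.leb_spec (S s) p).
  - rewrite (Nat.min_l (S s) p), (Nat.min_l s p) by lia. reflexivity.
  - rewrite (Nat.min_r (S s) p), (Nat.min_r s p) by lia. ring.
Qed.

Lemma omega_trunc n a x p q : (p <= q)%nat -> (q <= n)%nat ->
  omega n (trunc a x p) (trunc a x q) = vfun a p x * (vfun a q x - vfun a p x).
Proof.
  intros Hpq Hq. rewrite omega_partial_sums.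
  assert (Tel : forall s, sumR s (fun t =>
      (vfun a (Nat.min (t - 1) p) x + vfun a (Nat.min t p) x - vfun a p x) * (a t * x t))
    = if (s <=? p)%nat then vfun a s x * vfun a s x - vfun a p x * vfun a s x
      else vfun a p x * (vfun a s x - vfun a p x)).
  { induction s as [|s IH]; [simpl; unfold vfun; simpl; ring |].
    cbn [sumR]. rewrite IH. replace (S s - 1)%nat with s by lia.
    assert (VS : vfun a (S s) x = vfun a s x + a (S s) * x (S s)) by reflexivity.
    destruct (Nat.leb_spec (S s) p).
    - replace (s <=? p)%nat with true by (symmetry; apply Nat.leb_le; lia).
      rewrite (Nat.min_l s p), (Nat.min_l (S s) p), VS by lia. ring.
    - destruct (Nat.leb_spec s p).
      + assert (s = p) as -> by lia. rewrite (Nat.min_l p p), (Nat.min_r (S p) p), VS by lia. ring.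
      + rewrite (Nat.min_r s p), (Nat.min_r (S s) p), VS by lia. ring. }
  transitivity (sumR n (fun t => (if (t <=? q)%nat then 1 else 0) *
    ((vfun a (Nat.min (t - 1) p) x + vfun a (Nat.min t p) x - vfun a p x) * (a t * x t)))).
  - apply sumR_ext; intros t Ht. rewrite !sumR_trunc, (Nat.min_r n p) by lia.
    unfold trunc. destruct (t <=? q)%nat; ring.
  - rewrite sumR_cut, Tel by lia. destruct (Nat.leb_spec q p).
    + replace q with p by lia. ring.
    + ring.
Qed.

(** * Logarithmic gradients *)

Definition upd (x : nat -> R) (i : nat) (t : R) : nat -> R :=
  fun j => if Nat.eqb j i then t else x j.

Lemma upd_same x i : upd x i (x i) = x.
Proof. extensionality j. unfold upd. destruct (Nat.eqb_spec j i); subst; auto. Qed.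

Definition log_grad_at (n : nat) (f : (nat -> R) -> R) (x D : nat -> R) : Prop :=
  exists g, grad_at n f x g /\ forall i, (1 <= i <= n)%nat -> x i * g i = D i.

Lemma log_grad_of_partials n f x D :
  (forall i, (1 <= i <= n)%nat -> exists d, has_partial f x i d /\ x i * d = D i) ->
  log_grad_at n f x D.
Proof.
  intros H.
  destruct (choice (fun i d => (1 <= i <= n)%nat -> has_partial f x i d /\ x i * d = D i))
    as [g Hg].
  - intros i. destruct (Compare_dec.le_dec 1 i); destruct (Compare_dec.le_dec i n).
    2-4: exists 0; lia.
    destruct (H i) as [d Hd]; [lia |]. exists d; auto.
  - exists g. split; intros i Hi; apply Hg; auto.
Qed.

Lemma partial_coord x i j :
  derivable_pt_lim (fun t => upd x i t j) (x i) (if Nat.eqb j i then 1 else 0).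
Proof.
  unfold upd. destruct (Nat.eqb j i); [apply derivable_pt_lim_id | apply derivable_pt_lim_const].
Qed.

Lemma partial_vfun a x i s : (1 <= i)%nat ->
  derivable_pt_lim (fun t => vfun a s (upd x i t)) (x i) (if (i <=? s)%nat then a i else 0).
Proof.
  intros Hi. induction s as [|s IH].
  - replace (i <=? 0)%nat with false by (symmetry; apply Nat.leb_gt; lia).
    apply derivable_pt_lim_const.
  - assert (D := derivable_pt_lim_plus _ _ _ _ _ IH
      (derivable_pt_lim_mult _ _ _ _ _ (derivable_pt_lim_const (a (S s)) (x i))
         (partial_coord x i (S s)))).
    cbv beta in D. unfold vfun in *. cbn [sumR].
    replace (if (i <=? S s)%nat then a i else 0) with
      ((if (i <=? s)%nat then a i else 0)
       + (0 * upd x i (x i) (S s) + a (S s) * (if (S s =? i)%nat then 1 else 0))); auto.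
    destruct (Nat.eqb_spec (S s) i) as [<- | Hne].
    + rewrite Nat.leb_refl.
      replace (S s <=? s)%nat with false by (symmetry; apply Nat.leb_gt; lia). ring.
    + destruct (Nat.leb_spec i s).
      * replace (i <=? S s)%nat with true by (symmetry; apply Nat.leb_le; lia). ring.
      * replace (i <=? S s)%nat with false by (symmetry; apply Nat.leb_gt; lia). ring.
Qed.

Fixpoint stepind (j k i : nat) : R :=
  match k with
  | O => 0
  | S k' => (if Nat.eqb i j then 1 else 0) + stepind (j + 2) k' i
  end.

Lemma stepind_S k : forall j i,
  stepind j (S k) i = stepind j k i + (if (i =? j + 2 * k)%nat then 1 else 0).
Proof.
  induction k as [|k IH]; intros j i.
  - simpl. rewrite Nat.add_0_r. ring.
  - change (stepind j (S (S k)) i) with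
      ((if Nat.eqb i j then 1 else 0) + stepind (j + 2) (S k) i).
    rewrite IH. simpl stepind. replace (j + 2 + 2 * k)%nat with (j + 2 * S k)%nat by lia. ring.
Qed.

Lemma stepind_sub k : forall p i, (1 <= p)%nat ->
  stepind p k i - stepind (S p) k i = sg p * alt p (p + 2 * k - 1) i.
Proof.
  unfold alt. induction k as [|k IH]; intros p i Hp.
  - cbn [stepind]. destruct (Nat.leb_spec p i).
    + replace (i <=? p + 2 * 0 - 1)%nat with false by (symmetry; apply Nat.leb_gt; lia).
      rewrite andb_false_r. ring.
    + simpl. ring.
  - simpl stepind. replace (S p + 2)%nat with (S (S (S p))) by lia.
    replace (p + 2)%nat with (S (S p)) by lia.
    transitivity ((if (i =? p)%nat then 1 else 0) - (if (i =? S p)%nat then 1 else 0)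
                  + (stepind (S (S p)) k i - stepind (S (S (S p))) k i)); [ring |].
    rewrite IH, sg_SS by lia.
    replace (S (S p) + 2 * k - 1)%nat with (p + 2 * S k - 1)%nat by lia.
    destruct (Nat.eqb_spec i p) as [-> | Hp'].
    + replace (S (S p) <=? p)%nat with false by (symmetry; apply Nat.leb_gt; lia).
      rewrite Nat.leb_refl.
      replace (p <=? p + 2 * S k - 1)%nat with true by (symmetry; apply Nat.leb_le; lia).
      replace (p =? S p)%nat with false by (symmetry; apply Nat.eqb_neq; lia).
      simpl. rewrite sg_sq. ring.
    + destruct (Nat.eqb_spec i (S p)) as [-> | Hsp].
      * replace (S (S p) <=? S p)%nat with false by (symmetry; apply Nat.leb_gt; lia).
        replace (p <=? S p)%nat with true by (symmetry; apply Nat.leb_le; lia).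
        replace (S p <=? p + 2 * S k - 1)%nat with true by (symmetry; apply Nat.leb_le; lia).
        simpl. rewrite sg_S. pose proof (sg_sq p). nra.
      * destruct (Nat.leb_spec p i).
        -- replace (S (S p) <=? i)%nat with true by (symmetry; apply Nat.leb_le; lia).
           simpl. ring.
        -- replace (S (S p) <=? i)%nat with false by (symmetry; apply Nat.leb_gt; lia).
           simpl. ring.
Qed.

Lemma log_partial_stepprod x i k : forall j, exists d,
  derivable_pt_lim (fun t => stepprod (upd x i t) j k) (x i) d /\
  x i * d = stepind j k i * stepprod x j k.
Proof.
  induction k as [|k IH]; intros j.
  - exists 0. split; [apply derivable_pt_lim_const | simpl; ring].
  - destruct (IH (j + 2)%nat) as [d [Hd Hx]].
    eexists. split.
    + exact (derivable_pt_lim_mult _ _ _ _ _ (partial_coord x i j) Hd).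
    + cbv beta. rewrite upd_same. simpl stepprod. simpl stepind.
      transitivity ((if Nat.eqb j i then 1 else 0) * x i * stepprod x (j + 2) k
                    + x j * (x i * d)); [ring |].
      rewrite Hx, Nat.eqb_sym. destruct (Nat.eqb_spec i j); subst; ring.
Qed.

Lemma stepprod_neq0 x j k :
  (forall r, (r < k)%nat -> x (j + 2 * r)%nat <> 0) -> stepprod x j k <> 0.
Proof.
  revert j. induction k as [|k IH]; intros j H; simpl; [lra |].
  apply Rmult_integral_contrapositive. split.
  - specialize (H 0%nat). rewrite Nat.add_0_r in H. apply H; lia.
  - apply IH. intros r Hr. replace (j + 2 + 2 * r)%nat with (j + 2 * S r)%nat by lia.
    apply H; lia.
Qed.

Lemma log_partial_stepquot x i j1 k1 j2 k2 : stepprod x j2 k2 <> 0 -> exists d,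
  derivable_pt_lim (fun t => stepprod (upd x i t) j1 k1 / stepprod (upd x i t) j2 k2) (x i) d
  /\ x i * d = (stepind j1 k1 i - stepind j2 k2 i) * (stepprod x j1 k1 / stepprod x j2 k2).
Proof.
  intros Hnz.
  destruct (log_partial_stepprod x i k1 j1) as [d1 [H1 E1]].
  destruct (log_partial_stepprod x i k2 j2) as [d2 [H2 E2]].
  eexists. split.
  - apply derivable_pt_lim_div; [exact H1 | exact H2 | rewrite upd_same; exact Hnz].
  - cbv beta. rewrite !upd_same. unfold Rsqr.
    transitivity ((x i * d1) / stepprod x j2 k2
                  - (x i * d2) * stepprod x j1 k1 / (stepprod x j2 k2 * stepprod x j2 k2));
      [field; exact Hnz |].
    rewrite E1, E2. field. exact Hnz.
Qed.

Lemma div2_double a b : a = (2 * b)%nat -> (a / 2)%nat = b.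
Proof. intros ->. rewrite Nat.mul_comm. apply Nat.div_mul. lia. Qed.

Lemma domain_stepprod_even n x c k : domain n x -> (1 <= c)%nat ->
  (2 * c + 2 * k <= n + 2)%nat -> stepprod x (2 * c) k <> 0.
Proof.
  intros Hd Hc Hk. apply stepprod_neq0. intros r Hr.
  replace (2 * c + 2 * r)%nat with (2 * (c + r))%nat by lia.
  apply Hd; [lia | apply Nat.even_even].
Qed.

Lemma trunc_partial a x i s : x i * (if (i <=? s)%nat then a i else 0) = trunc a x s i.
Proof. unfold trunc. destruct (i <=? s)%nat; ring. Qed.

Definition lgJ (x : nat -> R) (k i : nat) : R := Jfun k x * alt 1 (2 * k) i.

(* The monomial factor of [Ffun (2N+1) a m]. *)
Definition Fmono (N : nat) (x : nat -> R) (m : nat) : R :=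
  stepprod x (2 * m + 1) (N + 1 - m) / stepprod x (2 * m) (N + 1 - m).

Definition lgF (N : nat) (a x : nat -> R) (m i : nat) : R :=
  Fmono N x m * trunc a x (2 * m - 1) i
  + vfun a (2 * m - 1) x * Fmono N x m * alt (2 * m) (2 * N + 1) i.

Definition lgC (N : nat) (x : nat -> R) (i : nat) : R :=
  Cfun (2 * N + 1) x * alt 1 (2 * N + 1) i.

Lemma log_grad_Jfun n x k : domain n x -> (2 * k <= n)%nat ->
  log_grad_at n (Jfun k) x (lgJ x k).
Proof.
  intros Hd Hk. apply log_grad_of_partials. intros i Hi.
  assert (Hnz : stepprod x (2 * 1) k <> 0) by (apply (domain_stepprod_even n); auto; lia).
  destruct (log_partial_stepquot x i 1 k 2 k Hnz) as [d [H E]].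
  exists d. split; [exact H |].
  rewrite E. unfold lgJ, Jfun. rewrite (stepind_sub k 1 i), sg1 by lia.
  replace (1 + 2 * k - 1)%nat with (2 * k)%nat by lia. ring.
Qed.

Lemma log_grad_Hfun n a x : log_grad_at n (Hfun n a) x (trunc a x n).
Proof.
  apply log_grad_of_partials. intros i Hi. eexists. split.
  - apply (partial_vfun a x i n). lia.
  - apply trunc_partial.
Qed.

Lemma log_grad_Ffun N a x m : domain (2 * N + 1) x -> (1 <= m <= N)%nat ->
  log_grad_at (2 * N + 1) (Ffun (2 * N + 1) a m) x (lgF N a x m).
Proof.
  intros Hd Hm. apply log_grad_of_partials. intros i Hi.
  assert (HL : ((2 * N + 1 + 1 - 2 * m) / 2)%nat = (N + 1 - m)%nat) by (apply div2_double; lia).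
  assert (Hnz : stepprod x (2 * m) (N + 1 - m) <> 0)
    by (apply (domain_stepprod_even (2 * N + 1)); auto; lia).
  destruct (log_partial_stepquot x i (2 * m + 1) (N + 1 - m) (2 * m) (N + 1 - m) Hnz)
    as [d [H E]].
  pose proof (partial_vfun a x i (2 * m - 1) ltac:(lia)) as Hv.
  eexists. split.
  - unfold has_partial, Ffun. rewrite HL. exact (derivable_pt_lim_mult _ _ _ _ _ Hv H).
  - cbv beta. rewrite !upd_same.
    transitivity ((x i * (if (i <=? 2 * m - 1)%nat then a i else 0)) * Fmono N x m
                  + vfun a (2 * m - 1) x * (x i * d)); [unfold Fmono; ring |].
    rewrite E, trunc_partial. unfold lgF, Fmono.
    replace (stepind (2 * m + 1) (N + 1 - m) i - stepind (2 * m) (N + 1 - m) i) with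
      (- (stepind (2 * m) (N + 1 - m) i - stepind (S (2 * m)) (N + 1 - m) i))
      by (replace (S (2 * m)) with (2 * m + 1)%nat by lia; ring).
    rewrite stepind_sub, sg_even by lia.
    replace (2 * m + 2 * (N + 1 - m) - 1)%nat with (2 * N + 1)%nat by lia. ring.
Qed.

Lemma log_grad_Cfun N x : domain (2 * N + 1) x ->
  log_grad_at (2 * N + 1) (Cfun (2 * N + 1)) x (lgC N x).
Proof.
  intros Hd. apply log_grad_of_partials. intros i Hi.
  assert (H1 : ((2 * N + 1 + 1) / 2)%nat = (N + 1)%nat) by (apply div2_double; lia).
  assert (H2 : ((2 * N + 1 - 1) / 2)%nat = N) by (apply div2_double; lia).
  assert (Hnz : stepprod x (2 * 1) N <> 0)
    by (apply (domain_stepprod_even (2 * N + 1)); auto; lia).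
  destruct (log_partial_stepquot x i 1 (N + 1) 2 N Hnz) as [d [H E]].
  exists d. split.
  - unfold has_partial, Cfun. rewrite H1, H2. exact H.
  - rewrite E. unfold lgC, Cfun. rewrite H1, H2.
    (* the extra term of [stepind 2 (N+1)] sits at [2N+2 > n] *)
    replace (stepind 2 N i) with (stepind 2 (N + 1) i)
      by (rewrite Nat.add_1_r, stepind_S;
          replace (i =? 2 + 2 * N)%nat with false by (symmetry; apply Nat.eqb_neq; lia); ring).
    rewrite stepind_sub, sg1 by lia.
    replace (1 + 2 * (N + 1) - 1)%nat with (2 * N + 2)%nat by lia. unfold alt.
    replace (i <=? 2 * N + 2)%nat with true by (symmetry; apply Nat.leb_le; lia).
    replace (i <=? 2 * N + 1)%nat with true by (symmetry; apply Nat.leb_le; lia). ring.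
Qed.

Lemma sumR_alt_1 k s : sumR s (alt 1 k) = oddR (Nat.min s k).
Proof. rewrite sumR_alt, Nat.min_0_r by lia. simpl. ring. Qed.

(** * Involutivity *)

Section Brackets.
Variables (N : nat) (a x : nat -> R).
Let n := (2 * N + 1)%nat.

Lemma omega_lgJ_lgJ k1 k2 : (1 <= k1 <= k2)%nat -> (2 * k2 <= n)%nat ->
  omega n (lgJ x k1) (lgJ x k2) = 0.
Proof.
  intros. unfold lgJ. rewrite omega_scal_l, omega_scal_r, omega_alt_even_prefix by lia.
  rewrite sumR_alt_1, Nat.min_l, oddR_even by lia. ring.
Qed.

Lemma omega_lgJ_H k : (1 <= k)%nat -> (2 * k <= n)%nat -> vfun a (2 * k) x = 0 ->
  omega n (lgJ x k) (trunc a x n) = 0.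
Proof.
  intros Hk Hkn Hv. unfold lgJ.
  rewrite omega_scal_l, omega_alt_even_prefix, sumR_trunc, Nat.min_l, Hv by lia. ring.
Qed.

Lemma omega_lgJ_lgF k m : (1 <= k)%nat -> (k < m <= N)%nat -> vfun a (2 * k) x = 0 ->
  omega n (lgJ x k) (lgF N a x m) = 0.
Proof.
  intros Hk Hm Hv. unfold lgJ, lgF.
  rewrite omega_scal_l, omega_lin_r, !omega_alt_even_prefix, sumR_trunc, sumR_alt by lia.
  rewrite !Nat.min_l, Hv by lia. ring.
Qed.

Lemma omega_H_lgF m : (1 <= m <= N)%nat -> omega n (trunc a x n) (lgF N a x m) = 0.
Proof.
  intros. unfold lgF. rewrite omega_lin_r.
  rewrite (omega_antisym _ _ (trunc a x (2 * m - 1))), omega_trunc by lia.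
  rewrite (omega_antisym _ _ (alt (2 * m) n)). unfold n.
  rewrite omega_alt_even_tail, !sumR_trunc, !Nat.min_l by lia. ring.
Qed.

Lemma omega_lgF_lgF m1 m2 : (1 <= m1 <= m2)%nat -> (m2 <= N)%nat ->
  omega n (lgF N a x m1) (lgF N a x m2) = 0.
Proof.
  intros. unfold lgF. rewrite omega_lin_l, !omega_lin_r, omega_trunc by lia.
  rewrite (omega_antisym _ (trunc a x (2 * m1 - 1))). unfold n.
  rewrite !omega_alt_even_tail, !sumR_trunc, !sumR_alt by lia.
  rewrite (Nat.min_r (2 * N + 1) (2 * m1 - 1)), (Nat.min_r (2 * m2 - 1) (2 * m1 - 1)),
    (Nat.min_r (2 * N + 1) (2 * m2 - 1)), (Nat.min_l (2 * m1 - 1) (2 * m2 - 1)),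
    (Nat.min_l (2 * m1 - 1) (2 * N + 1)), Nat.min_id by lia.
  rewrite oddR_odd, !oddR_pred_odd by lia. ring.
Qed.

Lemma omega_lgC p : omega n p (lgC N x) = 0.
Proof. unfold lgC, n. rewrite omega_scal_r, omega_antisym, omega_alt_odd_full. ring. Qed.

End Brackets.

Definition pmember (N : nat) (a : nat -> R) (lam m : nat) : (nat -> R) -> R :=
  if (m <? lam)%nat then Jfun (m + 1)
  else if (m =? lam)%nat then Hfun (2 * N + 1) a
  else if (m <? N)%nat then Ffun (2 * N + 1) a (m + 1)
  else Cfun (2 * N + 1).

Definition pmember_lg (N : nat) (a : nat -> R) (lam : nat) (x : nat -> R) (m : nat) :
  nat -> R :=
  if (m <? lam)%nat then lgJ x (m + 1)
  else if (m =? lam)%nat then trunc a x (2 * N + 1)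
  else if (m <? N)%nat then lgF N a x (m + 1)
  else lgC N x.

Lemma pmember_lg_J N a lam x m : (m < lam)%nat -> pmember_lg N a lam x m = lgJ x (m + 1).
Proof.
  intros. unfold pmember_lg.
  replace (m <? lam)%nat with true by (symmetry; apply Nat.ltb_lt; lia). reflexivity.
Qed.

Lemma pmember_lg_H N a lam x : pmember_lg N a lam x lam = trunc a x (2 * N + 1).
Proof. unfold pmember_lg. rewrite Nat.ltb_irrefl, Nat.eqb_refl. reflexivity. Qed.

Lemma pmember_lg_F N a lam x m : (lam < m < N)%nat ->
  pmember_lg N a lam x m = lgF N a x (m + 1).
Proof.
  intros. unfold pmember_lg.
  replace (m <? lam)%nat with false by (symmetry; apply Nat.ltb_ge; lia).
  replace (m =? lam)%nat with false by (symmetry; apply Nat.eqb_neq; lia).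
  replace (m <? N)%nat with true by (symmetry; apply Nat.ltb_lt; lia). reflexivity.
Qed.

Lemma pmember_lg_C N a lam x : (lam < N)%nat -> pmember_lg N a lam x N = lgC N x.
Proof.
  intros. unfold pmember_lg.
  replace (N <? lam)%nat with false by (symmetry; apply Nat.ltb_ge; lia).
  replace (N =? lam)%nat with false by (symmetry; apply Nat.eqb_neq; lia).
  rewrite Nat.ltb_irrefl. reflexivity.
Qed.

Lemma pfamily_length N a lam : (lam + 1 <= N)%nat ->
  length (pfamily (2 * N + 1) a lam) = (N + 1)%nat.
Proof.
  intros. unfold pfamily.
  replace ((2 * N + 1 - 1) / 2)%nat with N by (symmetry; apply div2_double; lia).
  rewrite !length_app, !length_map, !length_seq. simpl. lia.
Qed.

Lemma nth_pfamily N a lam m : (lam + 1 <= N)%nat -> (m <= N)%nat ->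
  nth m (pfamily (2 * N + 1) a lam) (fun _ => 0) = pmember N a lam m.
Proof.
  intros H Hm. unfold pfamily, pmember.
  replace ((2 * N + 1 - 1) / 2)%nat with N by (symmetry; apply div2_double; lia).
  destruct (Nat.ltb_spec m lam).
  - rewrite app_nth1 by (rewrite length_map, length_seq; lia).
    rewrite (nth_indep _ _ (Jfun 0)) by (rewrite length_map, length_seq; lia).
    rewrite map_nth, seq_nth by lia. f_equal; lia.
  - rewrite app_nth2, length_map, length_seq by (rewrite length_map, length_seq; lia).
    destruct (Nat.eqb_spec m lam) as [-> | Hne]; [rewrite Nat.sub_diag; reflexivity |].
    replace (m - lam)%nat with (S (m - lam - 1)) by lia. simpl nth.
    destruct (Nat.ltb_spec m N).
    + rewrite app_nth1 by (rewrite length_map, length_seq; lia).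
      rewrite (nth_indep _ _ (Ffun (2 * N + 1) a 0)) by (rewrite length_map, length_seq; lia).
      rewrite map_nth, seq_nth by lia. f_equal; lia.
    + rewrite app_nth2, length_map, length_seq by (rewrite length_map, length_seq; lia).
      replace (m - lam - 1 - (N - (lam + 1)))%nat with 0%nat by lia. reflexivity.
Qed.

Lemma log_grad_pmember N a lam x m :
  domain (2 * N + 1) x -> (lam + 1 <= N)%nat -> (m <= N)%nat ->
  log_grad_at (2 * N + 1) (pmember N a lam m) x (pmember_lg N a lam x m).
Proof.
  intros Hd Hlam Hm. unfold pmember, pmember_lg.
  destruct (Nat.ltb_spec m lam); [apply log_grad_Jfun; auto; lia |].
  destruct (Nat.eqb_spec m lam); [apply log_grad_Hfun |].
  destruct (Nat.ltb_spec m N); [apply log_grad_Ffun; auto; lia |].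
  apply log_grad_Cfun; auto.
Qed.

Lemma omega_pmember_ordered N a lam x m1 m2 :
  (forall s, (s <= 2 * lam)%nat -> vfun a s x = 0) -> (lam + 1 <= N)%nat ->
  (m1 <= m2 <= N)%nat ->
  omega (2 * N + 1) (pmember_lg N a lam x m1) (pmember_lg N a lam x m2) = 0.
Proof.
  intros Hz Hlam Hm. unfold pmember_lg.
  destruct (Nat.ltb_spec m2 lam).
  { replace (m1 <? lam)%nat with true by (symmetry; apply Nat.ltb_lt; lia).
    apply omega_lgJ_lgJ; lia. }
  destruct (Nat.ltb_spec m1 lam).
  { destruct (Nat.eqb_spec m2 lam); [apply omega_lgJ_H; try apply Hz; lia |].
    destruct (Nat.ltb_spec m2 N); [apply omega_lgJ_lgF; try apply Hz; lia |].
    apply omega_lgC. }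
  destruct (Nat.eqb_spec m1 lam).
  { destruct (Nat.eqb_spec m2 lam); [apply omega_diag |].
    destruct (Nat.ltb_spec m2 N); [apply omega_H_lgF; lia | apply omega_lgC]. }
  replace (m2 =? lam)%nat with false by (symmetry; apply Nat.eqb_neq; lia).
  destruct (Nat.ltb_spec m2 N); [| apply omega_lgC].
  replace (m1 <? N)%nat with true by (symmetry; apply Nat.ltb_lt; lia).
  apply omega_lgF_lgF; lia.
Qed.

Lemma pfamily_involution N a lam :
  (forall x s, (s <= 2 * lam)%nat -> vfun a s x = 0) -> (lam + 1 <= N)%nat ->
  forall f g, In f (pfamily (2 * N + 1) a lam) -> In g (pfamily (2 * N + 1) a lam) ->
  in_involution (2 * N + 1) f g.
Proof.
  intros Hz Hlam f g Hf Hg x Hx.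
  apply (In_nth _ _ (fun _ => 0)) in Hf as [m1 [Hm1 <-]].
  apply (In_nth _ _ (fun _ => 0)) in Hg as [m2 [Hm2 <-]].
  rewrite pfamily_length in Hm1, Hm2 by auto.
  rewrite !nth_pfamily by lia.
  destruct (log_grad_pmember N a lam x m1) as [g1 [G1 L1]]; [auto | auto | lia |].
  destruct (log_grad_pmember N a lam x m2) as [g2 [G2 L2]]; [auto | auto | lia |].
  exists g1, g2. split; [exact G1 | split; [exact G2 |]].
  rewrite poisson_omega, (omega_ext _ _ _ _ _ L1 L2).
  destruct (Nat.le_ge_cases m1 m2).
  - apply omega_pmember_ordered; auto; lia.
  - rewrite omega_antisym, omega_pmember_ordered by (auto; lia). ring.
Qed.

(** * Independence of the differentials *)

Lemma sumR_lgJ x k s : sumR s (lgJ x k) = Jfun k x * oddR (Nat.min s (2 * k)).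
Proof. unfold lgJ. rewrite sumR_scal, sumR_alt_1. reflexivity. Qed.

Lemma sumR_lgF N a x m s : (1 <= m <= N)%nat ->
  sumR s (lgF N a x m) =
  Fmono N x m * vfun a (Nat.min s (2 * m - 1)) x
  + vfun a (2 * m - 1) x * Fmono N x m
    * (oddR (Nat.min s (2 * N + 1)) - oddR (Nat.min s (2 * m - 1))).
Proof. intros. unfold lgF. rewrite sumR_lin, sumR_trunc, sumR_alt by lia. ring. Qed.

Lemma sumR_lgC N x s : sumR s (lgC N x) = Cfun (2 * N + 1) x * oddR (Nat.min s (2 * N + 1)).
Proof. unfold lgC. rewrite sumR_scal, sumR_alt_1. reflexivity. Qed.

Definition lsum (L : nat) (f : nat -> R) : R := fold_right Rplus 0 (map f (seq 0 L)).

Lemma lsum_S L f : lsum (S L) f = lsum L f + f L.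
Proof.
  unfold lsum. rewrite seq_S, map_app, fold_right_app. simpl.
  generalize (f L). induction (map f (seq 0 L)); intros r; simpl; [ring | rewrite IHl; ring].
Qed.

Lemma lsum_ext L f g : (forall m, (m < L)%nat -> f m = g m) -> lsum L f = lsum L g.
Proof. induction L; intros H; [reflexivity |]. rewrite !lsum_S, IHL, H; auto. Qed.

Lemma lsum_scal L r f : r * lsum L f = lsum L (fun m => r * f m).
Proof. induction L; [unfold lsum; simpl; ring |]. rewrite !lsum_S, <- IHL. ring. Qed.

Lemma lsum_eq0 L f : (forall m, (m < L)%nat -> f m = 0) -> lsum L f = 0.
Proof. induction L; intros H; [reflexivity |]. rewrite lsum_S, IHL, H by auto. ring. Qed.

Lemma lsum_isolate L f m0 : lsum L f = 0 -> (m0 < L)%nat ->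
  (forall m, (m < L)%nat -> m <> m0 -> f m = 0) -> f m0 = 0.
Proof.
  induction L as [|L IH]; intros H Hm Ho; [lia |]. rewrite lsum_S in H.
  destruct (Nat.eq_dec m0 L) as [-> | Hne].
  - rewrite lsum_eq0 in H by (intros; apply Ho; lia). lra.
  - apply IH; auto; [| lia]. rewrite (Ho L) in H by lia. lra.
Qed.

Lemma sumR_lsum_swap s L F :
  sumR s (fun i => lsum L (fun m => F m i)) = lsum L (fun m => sumR s (F m)).
Proof.
  induction L as [|L IH]; [apply sumR_eq0; reflexivity |].
  rewrite lsum_S, <- IH, <- sumR_add. apply sumR_ext; intros i _. apply (lsum_S L (fun m => F m i)).
Qed.

Lemma nat_down_ind (P : nat -> Prop) lo hi :
  (forall m, (lo <= m < hi)%nat -> (forall k, (m < k < hi)%nat -> P k) -> P m) ->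
  forall m, (lo <= m < hi)%nat -> P m.
Proof.
  intros H. enough (forall d m, (hi - d <= m)%nat -> (lo <= m < hi)%nat -> P m)
    by (intros m Hm; apply (H0 hi); lia).
  induction d as [|d IH]; intros m Hm Hr; apply H; auto; intros k Hk; [lia | apply IH; lia].
Qed.

Section Independence.
Variables (N : nat) (a x : nat -> R) (lam : nat) (c : nat -> R).
Hypothesis Hlam : (lam + 1 <= N)%nat.
Hypothesis Hx : forall i, (1 <= i <= 2 * N + 1)%nat -> x i <> 0.
Hypothesis Hv : forall t, (lam + 1 <= t <= N)%nat -> vfun a (2 * t) x <> 0.
Hypothesis Hrel : forall s, (s <= 2 * N + 1)%nat ->
  lsum (N + 1) (fun m => c m * sumR s (pmember_lg N a lam x m)) = 0.

Let P (s m : nat) : R := sumR s (pmember_lg N a lam x m).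

Lemma coef_isolate s m0 : (s <= 2 * N + 1)%nat -> (m0 <= N)%nat -> P s m0 <> 0 ->
  (forall m, (m <= N)%nat -> m <> m0 -> c m * P s m = 0) -> c m0 = 0.
Proof.
  intros Hs Hm0 Hnz Ho.
  assert (E : c m0 * P s m0 = 0).
  { apply (lsum_isolate (N + 1) _ m0 (Hrel s Hs)); [lia |].
    intros m Hm Hne. apply Ho; [lia | exact Hne]. }
  apply Rmult_integral in E as [E | E]; [exact E | contradiction].
Qed.

Lemma stepprod_x_neq0 j k : (1 <= j)%nat -> (j + 2 * k <= 2 * N + 3)%nat ->
  stepprod x j k <> 0.
Proof. intros. apply stepprod_neq0. intros r Hr. apply Hx. lia. Qed.

Lemma stepquot_x_neq0 j1 k1 j2 k2 : (1 <= j1)%nat -> (j1 + 2 * k1 <= 2 * N + 3)%nat ->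
  (1 <= j2)%nat -> (j2 + 2 * k2 <= 2 * N + 3)%nat ->
  stepprod x j1 k1 / stepprod x j2 k2 <> 0.
Proof.
  intros. apply Rmult_integral_contrapositive. split;
    [| apply Rinv_neq_0_compat]; apply stepprod_x_neq0; lia.
Qed.

Lemma P_even_J j m : (m < lam)%nat -> P (2 * j) m = 0.
Proof.
  intros. unfold P. rewrite pmember_lg_J, sumR_lgJ by lia.
  destruct (Nat.le_ge_cases j (m + 1)).
  - rewrite Nat.min_l, oddR_even by lia. ring.
  - rewrite Nat.min_r, oddR_even by lia. ring.
Qed.

Lemma P_even_F j m : (j <= N)%nat -> (lam < m < N)%nat ->
  P (2 * j) m = if (m <? j)%nat then 0 else Fmono N x (m + 1) * vfun a (2 * j) x.
Proof.
  intros. unfold P. rewrite pmember_lg_F, sumR_lgF by lia.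
  rewrite (Nat.min_l (2 * j) (2 * N + 1)), oddR_even by lia.
  destruct (Nat.ltb_spec m j).
  - rewrite Nat.min_r, oddR_pred_odd by lia. ring.
  - rewrite Nat.min_l, oddR_even by lia. ring.
Qed.

Lemma P_even_C j : (j <= N)%nat -> P (2 * j) N = 0.
Proof.
  intros. unfold P. rewrite pmember_lg_C, sumR_lgC, Nat.min_l, oddR_even by lia. ring.
Qed.

Lemma coef_H : c lam = 0.
Proof.
  apply (coef_isolate (2 * N)); try lia.
  - unfold P. rewrite pmember_lg_H, sumR_trunc, Nat.min_l by lia. apply Hv. lia.
  - intros m Hm Hne. destruct (Nat.lt_ge_cases m lam).
    + rewrite P_even_J by lia. ring.
    + destruct (Nat.eq_dec m N) as [-> | HN]; [rewrite P_even_C by lia; ring |].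
      rewrite P_even_F by lia. replace (m <? N)%nat with true by (symmetry; apply Nat.ltb_lt; lia).
      ring.
Qed.

Lemma coef_F m : (lam < m < N)%nat -> c m = 0.
Proof.
  intros Hm. apply (nat_down_ind (fun m => c m = 0) (lam + 1) N); [| lia]. clear m Hm.
  intros m0 Hm0 IH.
  apply (coef_isolate (2 * m0)); try lia.
  - rewrite P_even_F, Nat.ltb_irrefl by lia.
    apply Rmult_integral_contrapositive. split; [unfold Fmono; apply stepquot_x_neq0; lia |].
    apply Hv. lia.
  - intros m Hm Hne. destruct (Nat.lt_ge_cases m lam); [rewrite P_even_J by lia; ring |].
    destruct (Nat.eq_dec m lam) as [-> | Hl]; [rewrite coef_H; ring |].
    destruct (Nat.eq_dec m N) as [-> | HN]; [rewrite P_even_C by lia; ring |].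
    destruct (Nat.lt_ge_cases m0 m); [rewrite IH by lia; ring |].
    rewrite P_even_F by lia. replace (m <? m0)%nat with true by (symmetry; apply Nat.ltb_lt; lia).
    ring.
Qed.

Lemma coef_C : c N = 0.
Proof.
  apply (coef_isolate (2 * N + 1)); try lia.
  - unfold P. rewrite pmember_lg_C, sumR_lgC, Nat.min_id, oddR_odd, Rmult_1_r by lia.
    unfold Cfun.
    replace ((2 * N + 1 + 1) / 2)%nat with (N + 1)%nat by (symmetry; apply div2_double; lia).
    replace ((2 * N + 1 - 1) / 2)%nat with N by (symmetry; apply div2_double; lia).
    apply stepquot_x_neq0; lia.
  - intros m Hm Hne. destruct (Nat.lt_ge_cases m lam).
    + unfold P. rewrite pmember_lg_J, sumR_lgJ, Nat.min_r, oddR_even by lia. ring.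
    + destruct (Nat.eq_dec m lam) as [-> | Hl]; [rewrite coef_H; ring |].
      rewrite coef_F by lia. ring.
Qed.

Lemma coef_J m : (m < lam)%nat -> c m = 0.
Proof.
  intros Hm. apply (nat_down_ind (fun m => c m = 0) 0 lam); [| lia]. clear m Hm.
  intros m0 Hm0 IH. apply (coef_isolate (2 * m0 + 1)); try lia.
  - unfold P. rewrite pmember_lg_J, sumR_lgJ, Nat.min_l, oddR_odd, Rmult_1_r by lia.
    unfold Jfun. apply stepquot_x_neq0; lia.
  - intros m Hm Hne. destruct (Nat.lt_ge_cases m lam).
    + destruct (Nat.lt_ge_cases m0 m); [rewrite IH by lia; ring |].
      unfold P. rewrite pmember_lg_J, sumR_lgJ, Nat.min_r, oddR_even by lia. ring.
    + destruct (Nat.eq_dec m lam) as [-> | Hl]; [rewrite coef_H; ring |].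
      destruct (Nat.eq_dec m N) as [-> | HN]; [rewrite coef_C; ring |].
      rewrite coef_F by lia. ring.
Qed.

Lemma coef_all m : (m <= N)%nat -> c m = 0.
Proof.
  intros Hm. destruct (Nat.lt_ge_cases m lam); [apply coef_J; auto |].
  destruct (Nat.eq_dec m lam) as [-> | Hl]; [apply coef_H |].
  destruct (Nat.eq_dec m N) as [-> | HN]; [apply coef_C |].
  apply coef_F. lia.
Qed.

End Independence.

Lemma pfamily_diffs_independent N a lam x : (lam + 1 <= N)%nat ->
  (forall i, (1 <= i <= 2 * N + 1)%nat -> x i <> 0) ->
  (forall t, (lam + 1 <= t <= N)%nat -> vfun a (2 * t) x <> 0) ->
  diffs_independent_at (2 * N + 1) (pfamily (2 * N + 1) a lam) x.
Proof.
  intros Hlam Hx Hv.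
  assert (Hd : domain (2 * N + 1) x) by (intros i Hi _; apply Hx; auto).
  destruct (choice (fun m g => (m <= N)%nat ->
      grad_at (2 * N + 1) (pmember N a lam m) x g /\
      forall i, (1 <= i <= 2 * N + 1)%nat -> x i * g i = pmember_lg N a lam x m i))
    as [grads Hg].
  { intros m. destruct (Compare_dec.le_lt_dec m N) as [Hm | Hm].
    - destruct (log_grad_pmember N a lam x m Hd Hlam Hm) as [g Hg]. exists g; auto.
    - exists (fun _ => 0). lia. }
  exists grads. rewrite pfamily_length by auto. split.
  - intros m Hm. rewrite nth_pfamily by lia. apply Hg; lia.
  - intros c Hc m0 Hm0. apply (coef_all N a x lam c); auto; [| lia].
    intros s Hs.
    transitivity (sumR s (fun i => x i * lsum (N + 1) (fun m => c m * grads m i))).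
    + rewrite (sumR_ext s _ (fun i => lsum (N + 1) (fun m => x i * (c m * grads m i))))
        by (intros; apply lsum_scal).
      rewrite (sumR_lsum_swap s (N + 1) (fun m i => x i * (c m * grads m i))).
      apply lsum_ext. intros m Hm.
      transitivity (c m * sumR s (fun i => x i * grads m i)).
      * f_equal. apply sumR_ext. intros i Hi. symmetry. apply Hg; lia.
      * rewrite <- sumR_scal. apply sumR_ext. intros; ring.
    + apply sumR_eq0. intros i Hi. unfold lsum. rewrite Hc by lia. ring.
Qed.

(** * The open dense set *)

Definition lin (n : nat) (c x : nat -> R) : R := sumR n (fun i => c i * x i).

Definition nonvanishing_set (n : nat) (cs : list (nat -> R)) (x : nat -> R) : Prop :=
  forall c, In c cs -> lin n c x <> 0.

Lemma lin_shift n c x e s : lin n c (fun i => x i + s * e i) = lin n c x + s * lin n c e.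
Proof.
  unfold lin. rewrite <- (Rmult_1_l (sumR n (fun i => c i * x i))), <- sumR_lin.
  apply sumR_ext; intros; ring.
Qed.

Lemma lin_dist_le n c x y d :
  (forall i, (1 <= i <= n)%nat -> Rabs (y i - x i) <= d) ->
  Rabs (lin n c y - lin n c x) <= d * sumR n (fun i => Rabs (c i)).
Proof.
  intros H. rewrite <- sumR_scal.
  replace (lin n c y - lin n c x) with (sumR n (fun i => c i * (y i - x i))).
  - apply sumR_abs_le. intros i Hi. rewrite Rabs_mult, Rmult_comm.
    apply Rmult_le_compat_r; [apply Rabs_pos | apply H; auto].
  - unfold lin. replace (sumR n (fun i => c i * y i) - sumR n (fun i => c i * x i))
      with (1 * sumR n (fun i => c i * y i) + (-1) * sumR n (fun i => c i * x i)) by ring.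
    rewrite <- sumR_lin. apply sumR_ext; intros; ring.
Qed.

Lemma open_nonvanishing n cs : open_n n (nonvanishing_set n cs).
Proof.
  induction cs as [|c cs IH]; intros x Hx.
  - exists 1. split; [lra | intros y _ c []].
  - destruct (IH x (fun c' Hc' => Hx c' (or_intror Hc'))) as [e1 [He1 H1]].
    set (S := sumR n (fun i => Rabs (c i))).
    assert (HS : 0 <= S) by (apply sumR_nonneg; intros; apply Rabs_pos).
    assert (Hc : Rabs (lin n c x) > 0) by (apply Rabs_pos_lt, Hx; left; auto).
    set (e2 := Rabs (lin n c x) / (S + 1)).
    assert (He2 : 0 < e2) by (apply Rdiv_lt_0_compat; lra).
    assert (He2S : e2 * S < Rabs (lin n c x)).
    { unfold e2. apply (Rmult_lt_reg_r (S + 1)); [lra |]. field_simplify; lra. }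
    exists (Rmin e1 e2). split; [apply Rmin_pos; lra |].
    intros y Hy c' [<- | Hc'].
    + assert (B : Rabs (lin n c y - lin n c x) <= e2 * S).
      { apply lin_dist_le. intros i Hi. pose proof (Hy i Hi). pose proof (Rmin_r e1 e2). lra. }
      intros Hz. rewrite Hz, Rminus_0_l, Rabs_Ropp in B. lra.
    + apply H1; auto. intros i Hi. pose proof (Hy i Hi). pose proof (Rmin_l e1 e2). lra.
Qed.

Lemma exists_avoiding (bs : list R) lo hi : lo < hi -> exists s, lo < s < hi /\ ~ In s bs.
Proof.
  revert lo hi. induction bs as [|b bs IH]; intros lo hi H.
  - exists ((lo + hi) / 2). split; [lra | intros []].
  - destruct (IH lo hi H) as [s [Hs Hn]]. destruct (Req_dec s b) as [-> | Hsb].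
    + destruct (IH lo b ltac:(lra)) as [s' [Hs' Hn']]. exists s'.
      split; [lra | intros [E | E]; [lra | auto]].
    + exists s. split; [auto | intros [E | E]; auto].
Qed.

(* Perturbing along a direction [e] where no form vanishes avoids the finitely many
   bad step sizes [- lin c x / lin c e]. *)
Lemma dense_nonvanishing n cs e : nonvanishing_set n cs e -> dense_n n (nonvanishing_set n cs).
Proof.
  intros He x eps Heps.
  set (B := 1 + sumR n (fun i => Rabs (e i))).
  assert (HB : 1 <= B).
  { pose proof (sumR_nonneg n (fun i => Rabs (e i)) ltac:(intros; apply Rabs_pos)).
    unfold B. lra. }
  destruct (exists_avoiding (map (fun c => - lin n c x / lin n c e) cs) 0 (eps / B))
    as [s [Hs Hn]]; [apply Rdiv_lt_0_compat; lra |].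
  exists (fun i => x i + s * e i). split.
  - intros c Hc Hz. apply Hn, in_map_iff. exists c. split; [| exact Hc].
    rewrite lin_shift in Hz. pose proof (He c Hc). field_simplify_eq; [lra | auto].
  - intros i Hi. replace (x i + s * e i - x i) with (s * e i) by ring.
    rewrite Rabs_mult, (Rabs_right s) by lra.
    assert (Rabs (e i) <= B - 1).
    { unfold B. replace (1 + _ - 1) with (sumR n (fun i => Rabs (e i))) by ring.
      apply (sumR_term_le n (fun i => Rabs (e i))); auto. intros; apply Rabs_pos. }
    assert (s * B < eps).
    { apply (Rmult_lt_reg_r (/ B)); [apply Rinv_0_lt_compat; lra |]. field_simplify; lra. }
    nra.
Qed.

Definition ebasis (i : nat) : nat -> R := fun j => if (j =? i)%nat then 1 else 0.

Definition cut (a : nat -> R) (s : nat) : nat -> R := fun j => if (j <=? s)%nat then a j else 0.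

Lemma lin_ebasis n i x : (1 <= i <= n)%nat -> lin n (ebasis i) x = x i.
Proof.
  induction n as [|n IH]; intros Hi; [lia |]. unfold lin in *. cbn [sumR].
  unfold ebasis at 2. destruct (Nat.eqb_spec (S n) i) as [<- | Hne].
  - rewrite sumR_eq0; [ring |]. intros j Hj. unfold ebasis.
    replace (j =? S n)%nat with false by (symmetry; apply Nat.eqb_neq; lia). ring.
  - rewrite IH by lia. ring.
Qed.

Lemma lin_cut n a s x : (s <= n)%nat -> lin n (cut a s) x = vfun a s x.
Proof.
  intros. unfold lin. rewrite (sumR_ext n _ (trunc a x s)).
  - rewrite sumR_trunc, Nat.min_r by lia. reflexivity.
  - intros i Hi. unfold cut, trunc. destruct (i <=? s)%nat; ring.
Qed.

(* A large weight on the coordinate [j] makes every [v_s] with [j <= s] nonzero. *)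
Lemma exists_generic_point n a j ss : (1 <= j <= n)%nat -> a j <> 0 ->
  (forall s, In s ss -> (j <= s <= n)%nat) ->
  exists e, nonvanishing_set n (map ebasis (seq 1 n) ++ map (cut a) ss) e.
Proof.
  intros Hj Ha Hss.
  set (A := sumR n (fun i => Rabs (a i))).
  assert (HA : 0 <= A) by (apply sumR_nonneg; intros; apply Rabs_pos).
  assert (Hpa : 0 < Rabs (a j)) by (apply Rabs_pos_lt; auto).
  set (K := (A + 1) / Rabs (a j)).
  assert (HK : 0 <= K) by (apply Rle_mult_inv_pos; lra).
  exists (fun i => 1 + K * ebasis j i). intros c Hc.
  apply in_app_or in Hc as [Hc | Hc]; apply in_map_iff in Hc as [i [<- Hi]].
  - apply in_seq in Hi. rewrite lin_ebasis by lia.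
    unfold ebasis. destruct (i =? j)%nat; nra.
  - apply Hss in Hi.
    assert (E : lin n (cut a i) (fun i => 1 + K * ebasis j i)
                = sumR n (cut a i) + K * a j).
    { unfold lin.
      rewrite (sumR_ext n _ (fun k => 1 * cut a i k + K * (ebasis j k * cut a i k)))
        by (intros; ring).
      rewrite sumR_lin. fold (lin n (ebasis j) (cut a i)). rewrite lin_ebasis by lia.
      unfold cut. replace (j <=? i)%nat with true by (symmetry; apply Nat.leb_le; lia). ring. }
    rewrite E.
    assert (Hb : Rabs (sumR n (cut a i)) <= A).
    { apply sumR_abs_le. intros k Hk. unfold cut.
      destruct (k <=? i)%nat; [lra | rewrite Rabs_R0; apply Rabs_pos]. }
    assert (HKa : Rabs (K * a j) = A + 1).
    { rewrite Rabs_mult, (Rabs_right K) by lra. unfold K. field. lra. }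
    intros Hz. replace (K * a j) with (- sumR n (cut a i)) in HKa by lra.
    rewrite Rabs_Ropp in HKa. lra.
Qed.

Lemma pfamily_functionally_independent N a lam j : (lam + 1 <= N)%nat ->
  (1 <= j <= 2 * (lam + 1))%nat -> a j <> 0 ->
  functionally_independent (2 * N + 1) (pfamily (2 * N + 1) a lam).
Proof.
  intros Hlam Hj Ha.
  set (ts := seq (lam + 1) (N - lam)).
  set (forms := map ebasis (seq 1 (2 * N + 1)) ++ map (cut a) (map (fun t => 2 * t)%nat ts)).
  exists (nonvanishing_set (2 * N + 1) forms).
  split; [apply open_nonvanishing | split].
  - destruct (exists_generic_point (2 * N + 1) a j (map (fun t => 2 * t)%nat ts)) as [e He];
      [lia | exact Ha | |].
    + intros s Hs. apply in_map_iff in Hs as [t [<- Ht]]. apply in_seq in Ht. lia.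
    + exact (dense_nonvanishing _ _ e He).
  - intros x Hx. apply pfamily_diffs_independent; [exact Hlam | |].
    + intros i Hi. rewrite <- (lin_ebasis (2 * N + 1) i x) by exact Hi.
      apply Hx, in_or_app. left. apply in_map, in_seq. lia.
    + intros t Ht. rewrite <- (lin_cut (2 * N + 1) a (2 * t) x) by lia.
      apply Hx, in_or_app. right. apply in_map, (in_map (fun t => 2 * t)%nat), in_seq. lia.
Qed.

Lemma vfun_eq0 a x l s : (forall i, (1 <= i <= l)%nat -> a i = 0) -> (s <= l)%nat ->
  vfun a s x = 0.
Proof. intros Hz Hs. apply sumR_eq0. intros i Hi. rewrite Hz by lia. ring. Qed.

Theorem theorem2p4 (n : nat) (a : nat -> R) (l : nat) :
  Nat.odd n = true ->
  (l + 1 <= n)%nat ->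
  (forall i, (1 <= i <= l)%nat -> a i = 0) ->
  a (l + 1)%nat <> 0 ->
  (l + 2 <= n)%nat ->
  let lam := (l / 2)%nat in
  let fs := pfamily n a lam in
  length fs = ((n + 1) / 2)%nat /\
  (forall f g, In f fs -> In g fs -> in_involution n f g) /\
  functionally_independent n fs.
Proof.
  intros Hodd Hln Hz Ha Hl2n lam fs.
  apply Nat.odd_spec in Hodd as [N ->].
  assert (Hlam : (2 * lam <= l <= 2 * lam + 1)%nat).
  { pose proof (Nat.div_mod l 2 ltac:(lia)). pose proof (Nat.mod_upper_bound l 2 ltac:(lia)).
    unfold lam. lia. }
  assert (HlamN : (lam + 1 <= N)%nat) by lia.
  split; [| split].
  - unfold fs. rewrite pfamily_length by exact HlamN. symmetry. apply div2_double. lia.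
  - apply pfamily_involution; [| exact HlamN]. intros x s Hs. apply (vfun_eq0 a x l); [exact Hz | lia].
  - apply (pfamily_functionally_independent N a lam (l + 1)); [exact HlamN | lia | exact Ha].
Qed.
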